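(* Let $\Delta$ be a local derivation of $\mathcal{S}$ such that $\Delta(L_1)=0$ and $\Delta(G_1)=aG_1$ for some $a\in\mathbb{C}$. Then $\Delta(G_1)=0$.
   Context: $\mathcal{S}$ is the centerless super Virasoro algebra: the Lie superalgebra over $\mathbb{C}$ with basis $\{L_m,G_n: m,n\in\mathbb{Z}\}$, $L_m$ even, $G_n$ odd, and brackets $[L_m,L_n]=(m-n)L_{m+n}$, $[L_m,G_r]=(\frac m2-r)G_{m+r}$, $[G_r,G_s]=2L_{r+s}$. A homogeneous linear map $D$ of parity $|D|$ is a derivation if $D([x,y])=[D(x),y]+(-1)^{|D||x|}[x,D(y)]$ for homogeneous $x,y$; derivations are sums of even and odd ones. A linear map $\Delta:\mathcal{S}\to\mathcal{S}$ is a local derivation if for every $x$ there is a derivation $D_x$ with $\Delta(x)=D_x(x)$. *)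

(* The centerless super Virasoro algebra S is the free C-module with basis
   indexed by bool * int: (false, m) = L_m (even), (true, r) = G_r (odd),
   realised as finitely supported functions (multinomials' monalg). *)
From HB Require Import structures.
From mathcomp Require Import all_boot all_order all_algebra.
From mathcomp Require Import finmap.
From mathcomp.multinomials Require Import monalg.
From mathcomp Require Import complex.
From mathcomp Require Import Rstruct.
From Stdlib Require Import Reals.

Set Implicit Arguments.
Unset Strict Implicit.
Unset Printing Implicit Defensive.

Import GRing.Theory Num.Theory.
Local Open Scope ring_scope.


Definition SVidx : choiceType := (bool * int)%type.

Definition SV : lmodType (complex Rdefinitions.R) :=
  {malg (complex Rdefinitions.R)[SVidx]}.

Definition Lb (m : int) : SV := << (false, m) >>.
Definition Gb (r : int) : SV := << (true, r) >>.

Definition halfz (m : int) : complex Rdefinitions.R := m%:~R / 2%:R.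

Definition brb (k l : SVidx) : SV :=
  match k, l with
  | (false, m), (false, n) => (m - n)%:~R *: Lb (m + n)
  | (false, m), (true, r)  => (halfz m - r%:~R) *: Gb (m + r)
  | (true, r),  (false, m) => - ((halfz m - r%:~R) *: Gb (m + r))
  | (true, r),  (true, s)  => 2%:R *: Lb (r + s)
  end.

Definition br (x y : SV) : SV :=
  \sum_(k <- msupp x) \sum_(l <- msupp y) ((x@_k * y@_l) *: brb k l).

Definition homog (b : bool) (x : SV) : Prop :=
  forall k : SVidx, k.1 != b -> x@_k = 0.

Definition hderivation (d : bool) (D : {linear SV -> SV}) : Prop :=
  (forall (b : bool) (x : SV), homog b x -> homog (addb d b) (D x)) /\
  (forall (bx by_ : bool) (x y : SV), homog bx x -> homog by_ y ->
     D (br x y) = br (D x) y + (- 1) ^+ (d && bx) *: br x (D y)).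

Definition derivation (D : {linear SV -> SV}) : Prop :=
  exists D0 D1 : {linear SV -> SV},
    hderivation false D0 /\ hderivation true D1 /\
    forall x, D x = D0 x + D1 x.

Definition local_derivation (Delta : {linear SV -> SV}) : Prop :=
  forall x : SV, exists D : {linear SV -> SV}, derivation D /\ Delta x = D x.

(* Put v = L_1 + c G_1.  For every derivation D = D0 + D1 (even plus
   odd part) the coefficients of D v on L_1 and G_1 are tied together:
       4 ((D v)_{G_1} - c (D v)_{L_1}) = - (4 c^2 + 1) (D G_1)_{L_1}.
   This comes from reading the Leibniz rule coefficientwise on a few brackets
   of basis vectors: for the even part, [L_1,L_0], [G_0,G_0], [G_1,G_0] force
   (D0 L_1)_{L_1} = (D0 G_1)_{G_1}; for the odd part, [L_0,G_1], [L_1,L_{-1}],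
   [L_{-1},G_1], [L_1,G_0] force 4 (D1 L_1)_{G_1} = - (D1 G_1)_{L_1}.
   Choosing c = i/2 kills the right-hand side.  Since Delta v = D v for some
   derivation D while Delta v = (c a) G_1 by linearity, we get c a = 0. *)

From HB Require Import structures.
From mathcomp Require Import all_boot all_order all_algebra finmap.
From mathcomp.multinomials Require Import monalg.
From mathcomp Require Import complex Rstruct.
From mathcomp Require Import ring.

Set Implicit Arguments.
Unset Strict Implicit.
Unset Printing Implicit Defensive.

Import GRing.Theory Num.Theory.
Local Open Scope ring_scope.

Notation C := (complex Rdefinitions.R).

Definition bv (k : SVidx) : SV := << k >>.

Definition idx (k l : SVidx) : SVidx := (addb k.1 l.1, k.2 + l.2).

Definition cb (k l : SVidx) : C :=
  match k, l with
  | (false, m), (false, n) => (m - n)%:~R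
  | (false, m), (true, r)  => halfz m - r%:~R
  | (true, r),  (false, m) => - (halfz m - r%:~R)
  | (true, r),  (true, s)  => 2%:R
  end.

Definition shift (t l : SVidx) : SVidx := (addb t.1 l.1, t.2 - l.2).

Lemma idx_shift k l t : (idx k l == t) = (k == shift t l).
Proof.
case: k t => [b m] [c n]; rewrite /idx /shift /= !xpair_eqE.
congr (_ && _); first by case: b; case: c; case: l.1.
by apply/eqP/eqP => [<-|->]; rewrite ?addrK ?subrK.
Qed.

Lemma idxC k l : idx k l = idx l k.
Proof. by rewrite /idx addbC addrC. Qed.

Lemma brbE k l : brb k l = cb k l *: bv (idx k l).
Proof.
case: k l => [[] m] [[] n]; rewrite /brb /cb /idx /bv /Lb /Gb;
  cbn [fst snd addb negb]; rewrite ?scaleNr; try rewrite [n + m]addrC; reflexivity.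
Qed.

Lemma msupp_bv k : msupp (bv k) = [fset k]%fset.
Proof. by rewrite msuppU oner_eq0. Qed.

Lemma mcoeff_bv k t : (bv k)@_t = (k == t)%:R.
Proof. exact: mcoeffU. Qed.

Lemma mcoeff_bv_id k : (bv k)@_k = 1.
Proof. exact: mcoeffUU. Qed.

Lemma hom_bv k : homog k.1 (bv k).
Proof. by move=> t ne; rewrite mcoeff_bv; case: eqP => // kt; rewrite kt eqxx in ne. Qed.

Lemma mcoeff_sum (s : seq SVidx) (F : SVidx -> SV) t :
  (\sum_(k <- s) F k)@_t = \sum_(k <- s) (F k)@_t.
Proof. exact: (big_morph _ (mcoeffD t) (mcoeff0 t)). Qed.

(* A sum over the support of u whose weights vanish off k0 picks out the
   coefficient of u at k0 (also when k0 lies outside the support). *)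
Lemma mcoeff_sum_msupp (u : SV) (k0 : SVidx) (f : SVidx -> C) :
  (forall k, k != k0 -> f k = 0) ->
  \sum_(k <- msupp u) u@_k * f k = u@_k0 * f k0.
Proof.
move=> f0.
transitivity (\sum_(k <- msupp u) (<< u@_k *g k >> : SV)@_k0 * f k0).
  apply: eq_bigr => k _; rewrite mcoeffU.
  case: eqP => [->|/eqP ne]; first by rewrite mulr1n.
  by rewrite f0 // mulr0 mulr0n mul0r.
by rewrite -mulr_suml -raddf_sum -monalgE.
Qed.

Lemma br_coefR (u : SV) l t :
  (br u (bv l))@_t = u@_(shift t l) * cb (shift t l) l.
Proof.
rewrite /br mcoeff_sum.
under eq_bigr => k _ do
  rewrite msupp_bv big_seq_fset1 mcoeffZ mcoeff_bv_id mulr1 brbE mcoeffZ mcoeff_bv idx_shift.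
rewrite (@mcoeff_sum_msupp u (shift t l)); first by rewrite eqxx mulr1.
by move=> k /negbTE->; rewrite mulr0.
Qed.

Lemma br_coefL (u : SV) l t :
  (br (bv l) u)@_t = u@_(shift t l) * cb l (shift t l).
Proof.
rewrite /br msupp_bv big_seq_fset1 mcoeff_sum.
under eq_bigr => k _ do
  rewrite mcoeffZ mcoeff_bv_id mul1r brbE mcoeffZ mcoeff_bv idxC idx_shift.
rewrite (@mcoeff_sum_msupp u (shift t l)); first by rewrite eqxx mulr1.
by move=> k /negbTE->; rewrite mulr0.
Qed.

Lemma br_bv k l : br (bv k) (bv l) = brb k l.
Proof. by rewrite /br !msupp_bv !big_seq_fset1 !mcoeff_bv_id mulr1 scale1r. Qed.

Section HomogeneousDerivation.

Variables (d : bool) (D : {linear SV -> SV}).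
Hypothesis HD : hderivation d D.

Lemma hder_parity l t : t.1 != addb d l.1 -> (D (bv l))@_t = 0.
Proof. exact: (proj1 HD _ _ (@hom_bv l) t). Qed.

(* The Leibniz rule D [bv k, bv l] = [D bv k, bv l] +- [bv k, D bv l], read
   at the coefficient of index t. *)
Lemma hder_coef k l t :
  cb k l * (D (bv (idx k l)))@_t =
  (D (bv k))@_(shift t l) * cb (shift t l) l +
  (-1) ^+ (d && k.1) * ((D (bv l))@_(shift t k) * cb k (shift t k)).
Proof.
have := congr1 (mcoeff t) (proj2 HD _ _ _ _ (@hom_bv k) (@hom_bv l)).
rewrite mcoeffD mcoeffZ [X in _ = X + _]br_coefR [X in _ = _ + _ * X]br_coefL.
by rewrite br_bv brbE linearZ_LR mcoeffZ.
Qed.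

End HomogeneousDerivation.

Lemma eq_from_relation (R : comRingType) (c x y u v : R) :
  u = v -> x - y = c * (u - v) -> x = y.
Proof. by move=> uv xy; apply/eqP; rewrite -subr_eq0 xy uv subrr mulr0. Qed.

(* The relations are the Leibniz rule on [L_1, L_0] = L_1, [G_0, G_0] = 2 L_0
   and [G_1, G_0] = 2 L_1; they give a0 = 0, then b0 = 0, then a1 = b1. *)
Lemma even_hder_L1_G1 (D : {linear SV -> SV}) :
  hderivation false D -> (D (Lb 1))@_(false, 1) = (D (Gb 1))@_(true, 1).
Proof.
move=> HD.
set a0 := (D (bv (false, 0)))@_(false, 0).
set a1 := (D (Lb 1))@_(false, 1).
set b0 := (D (bv (true, 0)))@_(true, 0).
set b1 := (D (Gb 1))@_(true, 1).
have rL1L0 : cb (false, 1) (false, 0) * a1 =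
    a1 * cb (false, 1) (false, 0) + 1 * (a0 * cb (false, 1) (false, 0)) :=
  hder_coef HD (false, 1) (false, 0) (false, 1).
have rG0G0 : cb (true, 0) (true, 0) * a0 =
    b0 * cb (true, 0) (true, 0) + 1 * (b0 * cb (true, 0) (true, 0)) :=
  hder_coef HD (true, 0) (true, 0) (false, 0).
have rG1G0 : cb (true, 1) (true, 0) * a1 =
    b1 * cb (true, 1) (true, 0) + 1 * (b0 * cb (true, 1) (true, 0)) :=
  hder_coef HD (true, 1) (true, 0) (false, 1).
clearbody a0 a1 b0 b1.
have a0_0 : a0 = 0 by apply: (eq_from_relation (c := -1) rL1L0); rewrite /cb; field.
have b0_0 : b0 = 0.
  rewrite a0_0 in rG0G0.
  by apply: (eq_from_relation (c := -1/4%:R) rG0G0); rewrite /cb; field.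
rewrite b0_0 in rG1G0.
by apply: (eq_from_relation (c := 1/2%:R) rG1G0); rewrite /cb; field.
Qed.

(* The relations are the Leibniz rule on
   [L_0, G_1], [L_1, L_{-1}], [L_1, G_0] and [L_{-1}, G_1]; they give
   g0 = 0, gm = - g1, d0 = d1/2 - 2 g1, and finally 5 g1 = - 5/4 d1. *)
Lemma odd_hder_L1_G1 (D : {linear SV -> SV}) :
  hderivation true D -> 4%:R * (D (Lb 1))@_(true, 1) = - (D (Gb 1))@_(false, 1).
Proof.
move=> HD.
set g0 := (D (bv (false, 0)))@_(true, 0).
set g1 := (D (Lb 1))@_(true, 1).
set gm := (D (bv (false, -1)))@_(true, -1).
set d0 := (D (bv (true, 0)))@_(false, 0).
set d1 := (D (Gb 1))@_(false, 1).
have rL0G1 : cb (false, 0) (true, 1) * d1 =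
    g0 * cb (true, 0) (true, 1) + 1 * (d1 * cb (false, 0) (false, 1)) :=
  hder_coef HD (false, 0) (true, 1) (false, 1).
have rL1Lm : cb (false, 1) (false, -1) * g0 =
    g1 * cb (true, 1) (false, -1) + 1 * (gm * cb (false, 1) (true, -1)) :=
  hder_coef HD (false, 1) (false, -1) (true, 0).
have rLmG1 : cb (false, -1) (true, 1) * d0 =
    gm * cb (true, -1) (true, 1) + 1 * (d1 * cb (false, -1) (false, 1)) :=
  hder_coef HD (false, -1) (true, 1) (false, 0).
have rL1G0 : cb (false, 1) (true, 0) * d1 =
    g1 * cb (true, 1) (true, 0) + 1 * (d0 * cb (false, 1) (false, 0)) :=
  hder_coef HD (false, 1) (true, 0) (false, 1).
clearbody g0 g1 gm d0 d1.
have g0_0 : g0 = 0.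
  by apply: (eq_from_relation (c := -1/2%:R) rL0G1); rewrite /cb /halfz; field.
have gmE : gm = - g1.
  rewrite g0_0 in rL1Lm.
  by apply: (eq_from_relation (c := -2%:R/3%:R) rL1Lm); rewrite /cb /halfz; field.
have d0E : d0 = d1 / 2%:R - 2%:R * g1.
  by apply: (eq_from_relation (c := -1) rL1G0); rewrite /cb /halfz; field.
rewrite gmE d0E in rLmG1.
by apply: (eq_from_relation (c := 4%:R/5%:R) rLmG1); rewrite /cb /halfz; field.
Qed.

(* Split D into its even and odd parts; parity kills the cross terms and the
   two previous lemmas relate the remaining ones. *)
Lemma derivation_L1_G1 (D : {linear SV -> SV}) (c : C) :
  derivation D ->
  4%:R * ((D (Lb 1 + c *: Gb 1))@_(true, 1) - c * (D (Lb 1 + c *: Gb 1))@_(false, 1)) =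
  - (4%:R * c ^+ 2 + 1) * (D (Gb 1))@_(false, 1).
Proof.
case=> [D0 [D1 [H0 [H1 HD]]]].
have coefD t x : (D x)@_t = (D0 x)@_t + (D1 x)@_t by rewrite HD mcoeffD.
have coefD0 t : (D0 (Lb 1 + c *: Gb 1))@_t = (D0 (Lb 1))@_t + c * (D0 (Gb 1))@_t.
  by rewrite linearD linearZ_LR mcoeffD mcoeffZ.
have coefD1 t : (D1 (Lb 1 + c *: Gb 1))@_t = (D1 (Lb 1))@_t + c * (D1 (Gb 1))@_t.
  by rewrite linearD linearZ_LR mcoeffD mcoeffZ.
have D0G1_L1 : (D0 (Gb 1))@_(false, 1) = 0 :=
  hder_parity H0 (l := (true, 1)) (t := (false, 1)) isT.
have D0L1_G1 : (D0 (Lb 1))@_(true, 1) = 0 :=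
  hder_parity H0 (l := (false, 1)) (t := (true, 1)) isT.
have D1L1_L1 : (D1 (Lb 1))@_(false, 1) = 0 :=
  hder_parity H1 (l := (false, 1)) (t := (false, 1)) isT.
have D1G1_G1 : (D1 (Gb 1))@_(true, 1) = 0 :=
  hder_parity H1 (l := (true, 1)) (t := (true, 1)) isT.
have g1E : (D1 (Lb 1))@_(true, 1) = - (D1 (Gb 1))@_(false, 1) / 4%:R.
  by apply: (eq_from_relation (c := 1/4%:R) (odd_hder_L1_G1 H1)); field.
rewrite !coefD coefD0 coefD1 coefD0 coefD1 D0G1_L1 D0L1_G1 D1L1_L1 D1G1_G1.
by rewrite -(even_hder_L1_G1 H0) g1E; field.
Qed.

(* With c = i/2 the right-hand side of the key identity vanishes, while
   Delta (L_1 + c G_1) = (c a) G_1 has coefficients c a at G_1 and 0 at L_1;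
   so c a = 0 and a = 0. *)
Theorem lemma4p2 (Delta : {linear SV -> SV}) (a : complex Rdefinitions.R) :
  local_derivation Delta ->
  Delta (Lb 1) = 0 ->
  Delta (Gb 1) = a *: Gb 1 ->
  Delta (Gb 1) = 0.
Proof.
move=> Hloc HL HG.
pose lam : C := 'i / 2%:R.
have lam_neq0 : lam != 0 by rewrite mulf_neq0 ?neq0Ci // invr_eq0 pnatr_eq0.
have lam_root : 4%:R * lam ^+ 2 + 1 = 0 by rewrite expr_div_n sqrCi; field.
have [D [HD HDv]] := Hloc (Lb 1 + lam *: Gb 1).
have Delta_v : Delta (Lb 1 + lam *: Gb 1) = (lam * a) *: Gb 1.
  by rewrite linearD linearZ_LR HL HG add0r scalerA.
have := derivation_L1_G1 lam HD.
rewrite -HDv Delta_v lam_root !mcoeffZ mcoeffUU (@hom_bv (true, 1) (false, 1) isT).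
rewrite mulr1 !mulr0 subr0 oppr0 mul0r => /eqP.
rewrite mulf_eq0 pnatr_eq0 mulf_eq0 (negbTE lam_neq0) /= => /eqP a0.
by rewrite HG a0 scale0r.
Qed.
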